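(* Let $\rho\ge3$ be an integer and $(\rho_0,\rho_1,\rho_2)$ integers with $2\le\rho_0\le\rho_1\le\rho_2<\rho$ and $\rho_0+\rho_1+\rho_2=2\rho$. For every vector $\alpha=(\alpha_\ell)_{\ell=1}^{2\rho}$ over any extension field $\Phi$ of $F$, the following are equivalent: (i) $\det(M_\rho(\alpha))\neq0$; (ii) $\det(S_\rho(\alpha))\neq0$ and, for each $m\in\{0,1,2\}$, the entries $\alpha_\ell$, $\ell\in\Upsilon_m$, are pairwise distinct.
   Context: $\Upsilon_0=\{1,\dots,\rho_0\}$, $\Upsilon_1=\{\rho_0+1,\dots,\rho_0+\rho_1\}$, $\Upsilon_2=\{\rho_0+\rho_1+1,\dots,2\rho\}$. For $x=(x_\ell)_{\ell=1}^{2\rho}$ and $m\in\{0,1,2\}$, let $V_m(x)$ be the $\rho\times\rho_m$ matrix $(x_\ell^i)_{i=0,\dots,\rho-1;\ \ell\in\Upsilon_m}$. $M_\rho(x)$ is the $2\rho\times2\rho$ matrix $\begin{pmatrix}-V_0(x)&V_1(x)&0\\-V_0(x)&0&V_2(x)\end{pmatrix}$. For $m\in\{0,1,2\}$ let $\sigma_m(z)=\prod_{\ell\in\Upsilon_m}(z-x_\ell)=\sum_{j=0}^{\rho_m}\sigma_{m,j}z^{\rho_m-j}$, and let $E_\rho^{(m)}(x)$ be the $(\rho-\rho_m)\times\rho$ matrix whose $(i,c)$ entry ($i=1,\dots,\rho-\rho_m$, $c=1,\dots,\rho$) equals $\sigma_{m,c-i}$ if $0\le c-i\le\rho_m$ and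 $0$ otherwise. $S_\rho(x)$ is the $\rho\times\rho$ matrix obtained by stacking $E_\rho^{(0)}(x)$, $E_\rho^{(1)}(x)$, $E_\rho^{(2)}(x)$ (in that order) vertically. $M_\rho(\alpha)$, $S_\rho(\alpha)$ denote substitution $x\leftarrow\alpha$. *)

(* Indices are 0-based: the paper's index l in {1..2rho}
   corresponds to l-1 : 'I_(2*rho); matrix rows/columns likewise. *)
From HB Require Import structures.
From mathcomp Require Import all_boot all_order all_algebra.
Set Implicit Arguments. Unset Strict Implicit. Unset Printing Implicit Defensive.
Import GRing.Theory.
Local Open Scope ring_scope.

(* block index m of the (0-based) position l: l in Upsilon_m *)
Definition ups (r0 r1 : nat) (l : nat) : nat :=
  if (l < r0)%N then 0%N else if (l < r0 + r1)%N then 1%N else 2%N.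

Definition rhom (r0 r1 r2 : nat) (m : nat) : nat :=
  match m with 0 => r0 | 1 => r1 | _ => r2 end.

Section Defs.
Variable (Phi : fieldType) (rho r0 r1 r2 : nat).

(* M_rho(x) = [ -V0 V1 0 ; -V0 0 V2 ], with V_m entries x_l^i, i = row mod rho *)
Definition Mmat (x : 'I_(2 * rho) -> Phi) : 'M[Phi]_(2 * rho) :=
  \matrix_(r < 2 * rho, l < 2 * rho)
    let i := (if (r < rho)%N then val r else (val r - rho)%N) in
    match ups r0 r1 l with
    | 0%N => - x l ^+ i
    | 1%N => if (r < rho)%N then x l ^+ i else 0
    | _ => if (r < rho)%N then 0 else x l ^+ i
    end.

Definition sigma_poly (x : 'I_(2 * rho) -> Phi) (m : nat) : {poly Phi} :=
  \prod_(l < 2 * rho | ups r0 r1 l == m) ('X - (x l)%:P).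

Definition sigma_coef (x : 'I_(2 * rho) -> Phi) (m j : nat) : Phi :=
  (sigma_poly x m)`_(rhom r0 r1 r2 m - j).

Definition E_entry (x : 'I_(2 * rho) -> Phi) (m i c : nat) : Phi :=
  if (i <= c)%N && (c - i <= rhom r0 r1 r2 m)%N then sigma_coef x m (c - i) else 0.

Definition Emat (x : 'I_(2 * rho) -> Phi) (m : nat) :
  'M[Phi]_(rho - rhom r0 r1 r2 m, rho) :=
  \matrix_(i < rho - rhom r0 r1 r2 m, c < rho) E_entry x m i c.

(* S_rho(x): vertical stacking of E^(0) (rho - r0 rows), E^(1) (rho - r1 rows),
   E^(2) (remaining rows). *)
Definition Smat (x : 'I_(2 * rho) -> Phi) : 'M[Phi]_rho :=
  \matrix_(i < rho, c < rho)
    if (i < rho - r0)%N then E_entry x 0 i c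
    else if (i < (rho - r0) + (rho - r1))%N then E_entry x 1 (i - (rho - r0)) c
    else E_entry x 2 (i - ((rho - r0) + (rho - r1))) c.

End Defs.

From HB Require Import structures.
From mathcomp Require Import all_boot all_order all_algebra zify.

(* Identify vectors of length rho with polynomials of degree < rho.  The rows
   of S_rho are then the coefficient vectors of X^k sigma_m, k < rho - rho_m, so
   S_rho is singular iff Q_0 sigma_0 + Q_1 sigma_1 + Q_2 sigma_2 = 0 for some
   nonzero Q_m of degree < rho - rho_m; such a relation makes
   (Q_1 sigma_1, Q_2 sigma_2) a left kernel vector of M_rho.  Conversely, a
   right kernel vector u of M_rho has the same moments
   sum_(l in Upsilon_m) alpha_l^e u_l (e < rho) on the three blocks, and the
   common moment vector is killed by S_rho.  If S_rho is invertible all moments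
   vanish; pairing u with prod_(l' in Upsilon_m, l' <> l) (X - alpha_l') then
   gives u_l = 0 as soon as the alpha's of each block are distinct.  Equal
   alpha's in a block give two equal columns of M_rho. *)

Set Implicit Arguments. Unset Strict Implicit. Unset Printing Implicit Defensive.
Import GRing.Theory.
Local Open Scope ring_scope.

Lemma ups_le2 (r0 r1 l : nat) : (ups r0 r1 l <= 2)%N.
Proof. by rewrite /ups; case: ifP => //; case: ifP. Qed.

Lemma big_split3 (R : nmodType) (I : finType) (g : I -> nat) (F : I -> R) :
  (forall i, g i <= 2)%N ->
  \sum_i F i = \sum_(i | g i == 0%N) F i + \sum_(i | g i == 1%N) F i
             + \sum_(i | g i == 2%N) F i.
Proof.
move=> g2; rewrite !(big_mkcond (fun i => g i == _)) -!big_split /=.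
apply: eq_bigr => i _; have := g2 i.
by case: (g i) => [|[|[|]]] //= _; rewrite ?addr0 ?add0r.
Qed.

Lemma big_ord_double (R : nmodType) (n : nat) (F : nat -> R) :
  \sum_(r < 2 * n) F r = \sum_(r < n) F r + \sum_(r < n) F (n + r)%N.
Proof.
rewrite -!(big_mkord xpredT) (big_cat_nat _ (n := n)) //=; last lia.
rewrite -{2}(add0n n) big_addn (_ : 2 * n - n = n)%N; last lia.
by congr (_ + _); rewrite big_mkord; apply: eq_bigr => r _; rewrite addnC.
Qed.

Lemma poly_eq0_coefs (R : nzRingType) (p : {poly R}) (n : nat) :
  (size p <= n)%N -> (forall i, (i < n)%N -> p`_i = 0) -> p = 0.
Proof.
move=> szp p_i; apply/polyP => i; rewrite coef0.
by case: (ltnP i n) => [/p_i // | le_ni]; rewrite nth_default ?(leq_trans szp).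
Qed.

Section Sylvester.
Variables rho r0 r1 r2 : nat.
Hypothesis sum_r : (r0 + r1 + r2 = 2 * rho)%N.
Hypotheses (r0_lt : (r0 < rho)%N) (r1_lt : (r1 < rho)%N) (r2_lt : (r2 < rho)%N).

Lemma rhom_lt m : (rhom r0 r1 r2 m < rho)%N.
Proof. by case: m => [|[|]]. Qed.

Lemma card_ups m : (m <= 2)%N ->
  #|[pred l : 'I_(2 * rho) | ups r0 r1 l == m]| = rhom r0 r1 r2 m.
Proof.
move=> m2; rewrite -sum1_card.
rewrite -(big_mkord (fun l => ups r0 r1 l == m) (fun=> 1%N)) sum1_count.
rewrite -sum_r /index_iota subn0 !iotaD !count_cat add0n.
have count_blk a n k : (forall l, (a <= l < a + n)%N -> ups r0 r1 l = k) ->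
    count (fun l => ups r0 r1 l == m) (iota a n) = if m == k then n else 0%N.
  move=> ups_k; rewrite (eq_in_count (a2 := fun=> m == k)); last first.
    by move=> l; rewrite mem_iota => /ups_k ->.
  by case: (m == k); rewrite ?count_predT ?count_pred0 ?size_iota.
rewrite add0n (count_blk 0 r0 0) => [|l]; last first.
  by rewrite /ups => /andP[_ ->].
rewrite (count_blk r0 r1 1) => [|l]; last first.
  by rewrite /ups => /andP[le_l ->]; rewrite ltnNge le_l.
rewrite (count_blk (r0 + r1) r2 2) => [|l]; last first.
  by rewrite /ups => /andP[le_l _]; rewrite !ltnNge le_l (leq_trans (leq_addr _ _) le_l).
by clear count_blk; case: m m2 => [|[|[|]]] //= _; rewrite ?addn0.
Qed.

(* Row [i] of [S_rho] lies in the block [E^(srow_blk i)]; read from degree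
   [rho - 1] down to [0] it is the coefficient vector of
   [X^(srow_deg i) * sigma_(srow_blk i)] (see [Smat_coef]). *)
Definition srow_blk (i : nat) : nat :=
  if (i < rho - r0)%N then 0%N
  else if (i < (rho - r0) + (rho - r1))%N then 1%N else 2%N.

Definition srow_start (m : nat) : nat :=
  match m with 0 => 0 | 1 => rho - r0 | _ => (rho - r0) + (rho - r1) end%N.

Definition srow_deg (i : nat) : nat :=
  (rho - rhom r0 r1 r2 (srow_blk i) - 1 - (i - srow_start (srow_blk i)))%N.

Lemma srow_blk_le2 i : (srow_blk i <= 2)%N.
Proof. by rewrite /srow_blk; case: ifP => //; case: ifP. Qed.

Lemma srow_range i : (i < rho)%N ->
  (srow_start (srow_blk i) <= i <
   srow_start (srow_blk i) + (rho - rhom r0 r1 r2 (srow_blk i)))%N.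
Proof.
by move=> lt_i; rewrite /srow_blk; case: ifP => /= ?; [|case: ifP => /= ?]; lia.
Qed.

Lemma srow_deg_lt i :
  (i < rho)%N -> (srow_deg i < rho - rhom r0 r1 r2 (srow_blk i))%N.
Proof. by move/srow_range; rewrite /srow_deg; lia. Qed.

Lemma srow_inj i j : (i < rho)%N -> (j < rho)%N ->
  srow_blk i = srow_blk j -> srow_deg i = srow_deg j -> i = j.
Proof.
move=> /srow_range range_i /srow_range + eq_blk; rewrite /srow_deg -eq_blk.
by move: range_i; lia.
Qed.

Variables (Phi : fieldType) (x : 'I_(2 * rho) -> Phi).
Local Notation sigma := (sigma_poly r0 r1 x).

Lemma size_sigma m : (m <= 2)%N -> size (sigma m) = (rhom r0 r1 r2 m).+1.
Proof.
move=> m2; rewrite /sigma_poly -big_filter size_prod_XsubC size_filter.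
by rewrite -(card_ups m2) cardE /enum_mem size_filter.
Qed.

Lemma root_sigma (l : 'I_(2 * rho)) : root (sigma (ups r0 r1 l)) (x l).
Proof. by rewrite /root /sigma_poly horner_prod (bigD1 l) //= !hornerE subrr mul0r. Qed.

Lemma E_entry_coef m o c :
  (m <= 2)%N -> (o < rho - rhom r0 r1 r2 m)%N -> (c < rho)%N ->
  E_entry r0 r1 r2 x m o c =
  ('X^(rho - rhom r0 r1 r2 m - 1 - o) * sigma m)`_(rho - c.+1).
Proof.
move=> m2 lt_o lt_c; have := size_sigma m2; have := rhom_lt m.
rewrite coefXnM /E_entry /sigma_coef.
set rm := rhom r0 r1 r2 m in lt_o * => lt_rm size_sm.
case: ltnP => [lt_c_o | le_o_c]; first by case: andP => // -[]; lia.
case: (leqP o c) => [le_oc | lt_co] /=.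
  by rewrite ifT; [congr (_ `_ _) | ]; lia.
by rewrite nth_default // size_sm; lia.
Qed.

Definition srow_poly (i : nat) : {poly Phi} := 'X^(srow_deg i) * sigma (srow_blk i).

Lemma size_srow_poly i : (i < rho)%N -> (size (srow_poly i) <= rho)%N.
Proof.
move=> lt_i; rewrite (leq_trans (size_polyMleq _ _)) // size_polyXn.
rewrite size_sigma ?srow_blk_le2 //.
by have := srow_deg_lt lt_i; have := rhom_lt (srow_blk i); lia.
Qed.

Lemma Smat_coef (i c : 'I_rho) : Smat r0 r1 r2 x i c = (srow_poly i)`_(rho - c.+1).
Proof.
have range_i := srow_range (ltn_ord i).
rewrite /srow_poly /srow_deg -E_entry_coef ?srow_blk_le2 //; last by lia.
by rewrite mxE /srow_blk; case: ifP => [_|]; rewrite ?subn0 //; case: ifP.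
Qed.

Definition coef_row2 (p q : {poly Phi}) : 'rV[Phi]_(2 * rho) :=
  \row_(r < 2 * rho) if (r < rho)%N then p`_r else q`_(r - rho).

Lemma coef_row2_eq0 (p q : {poly Phi}) :
  (size p <= rho)%N -> (size q <= rho)%N -> coef_row2 p q = 0 -> p = 0 /\ q = 0.
Proof.
move=> szp szq /rowP row0; split.
  apply: (poly_eq0_coefs szp) => r lt_r; have lt_r2 : (r < 2 * rho)%N by lia.
  by have := row0 (Ordinal lt_r2); rewrite !mxE /= lt_r.
apply: (poly_eq0_coefs szq) => r lt_r; have lt_r2 : (rho + r < 2 * rho)%N by lia.
by have := row0 (Ordinal lt_r2); rewrite !mxE /= ltnNge leq_addr addKn.
Qed.

Lemma mul_coef_row2_Mmat (p q : {poly Phi}) (l : 'I_(2 * rho)) :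
  (size p <= rho)%N -> (size q <= rho)%N ->
  (coef_row2 p q *m Mmat r0 r1 x) 0 l =
  match ups r0 r1 l with 0 => - (p + q).[x l] | 1 => p.[x l] | _ => q.[x l] end.
Proof.
move=> szp szq; pose F r := (if (r < rho)%N then p`_r else q`_(r - rho)) *
  (let i := if (r < rho)%N then r else (r - rho)%N in
   match ups r0 r1 l with
   | 0%N => - x l ^+ i
   | 1%N => if (r < rho)%N then x l ^+ i else 0
   | _ => if (r < rho)%N then 0 else x l ^+ i
   end).
rewrite mxE (eq_bigr (fun r : 'I_(2 * rho) => F r)) => [|r _]; last by rewrite !mxE.
rewrite big_ord_double /F.
under eq_bigr => r _ do rewrite ltn_ord.
under [X in _ + X]eq_bigr => r _ do rewrite ltnNge leq_addr /= addKn.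
rewrite hornerD !(horner_coef_wide _ szp) !(horner_coef_wide _ szq).
case: (ups r0 r1 l) => [|[|k]].
- by rewrite opprD -!sumrN; congr (_ + _); apply: eq_bigr => r _; rewrite mulrN.
- by rewrite [X in _ + X]big1 ?addr0 // => r _; rewrite mulr0.
- by rewrite big1 ?add0r // => r _; rewrite mulr0.
Qed.

Definition srow_comb (w : 'rV[Phi]_rho) (m : nat) : {poly Phi} :=
  \sum_(i < rho | srow_blk i == m) w 0 i *: 'X^(srow_deg i).

Lemma size_srow_comb w m : (size (srow_comb w m) <= rho - rhom r0 r1 r2 m)%N.
Proof.
apply: (big_ind (fun p : {poly Phi} => size p <= _)%N) => [|p q szp szq|i /eqP <-].
- by rewrite size_poly0.
- by rewrite (leq_trans (size_polyD _ _)) // geq_max szp szq.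
by rewrite (leq_trans (size_scale_leq _ _)) // size_polyXn srow_deg_lt.
Qed.

Lemma coef_srow_comb w (i : 'I_rho) :
  (srow_comb w (srow_blk i))`_(srow_deg i) = w 0 i.
Proof.
rewrite /srow_comb coef_sum (bigD1 i) //= coefZ coefXn eqxx mulr1 big1 ?addr0 //.
move=> j /andP[/eqP blk_j j_neq]; rewrite coefZ coefXn.
case: eqP => [deg_eq | _]; last by rewrite mulr0.
have /val_inj j_eq := srow_inj (ltn_ord j) (ltn_ord i) blk_j (esym deg_eq).
by rewrite j_eq eqxx in j_neq.
Qed.

Lemma srow_comb_sigma (w : 'rV[Phi]_rho) : \sum_(i < rho) w 0 i *: srow_poly i =
  srow_comb w 0 * sigma 0 + srow_comb w 1 * sigma 1 + srow_comb w 2 * sigma 2.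
Proof.
rewrite (big_split3 _ (fun i : 'I_rho => srow_blk_le2 i)) /srow_comb !mulr_suml.
congr (_ + _ + _); apply: eq_big => // i /eqP blk_i.
all: by rewrite -scalerAl /srow_poly blk_i.
Qed.

Lemma mulmx_Smat_eq0 (w : 'rV[Phi]_rho) :
  w *m Smat r0 r1 r2 x = 0 -> \sum_(i < rho) w 0 i *: srow_poly i = 0.
Proof.
move=> /rowP wS0; apply: (poly_eq0_coefs (n := rho)).
  apply: (big_ind (fun p : {poly Phi} => size p <= rho)%N) => [|p q szp szq|i _].
  - by rewrite size_poly0.
  - by rewrite (leq_trans (size_polyD _ _)) // geq_max szp szq.
  by rewrite (leq_trans (size_scale_leq _ _)) ?size_srow_poly.
move=> e lt_e; have lt_c : (rho - e.+1 < rho)%N by lia.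
have := wS0 (Ordinal lt_c); rewrite !mxE coef_sum => wS_c; rewrite -[RHS]wS_c.
apply: eq_bigr => i _; rewrite coefZ Smat_coef /=; congr (_ * _`__); lia.
Qed.

Lemma sigma_neq0 m : sigma m != 0.
Proof. exact/monic_neq0/monic_prod_XsubC. Qed.

Lemma det_Mmat_eq0 : \det (Smat r0 r1 r2 x) == 0 -> \det (Mmat r0 r1 x) == 0.
Proof.
case/det0P => w w_neq0 /mulmx_Smat_eq0; rewrite srow_comb_sigma => relQ.
have szQ m : (m <= 2)%N -> (size (srow_comb w m * sigma m)%R <= rho)%N.
  move=> m2; rewrite (leq_trans (size_polyMleq _ _)) // size_sigma //.
  by have := @size_srow_comb w m; have := rhom_lt m; lia.
set Q := srow_comb w in relQ szQ *.
(* Q_1 sigma_1 + Q_2 sigma_2 = - Q_0 sigma_0 vanishes on block 0. *)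
apply/det0P; exists (coef_row2 (Q 1%N * sigma 1) (Q 2%N * sigma 2)).
  apply: contra w_neq0 => /eqP/(coef_row2_eq0 (szQ 1%N isT) (szQ 2%N isT))[Q1 Q2].
  have Q0 : Q 0%N * sigma 0 = 0 by move: relQ; rewrite Q1 Q2 !addr0.
  have Q_eq0 m : Q m * sigma m = 0 -> Q m = 0.
    by move/eqP; rewrite mulf_eq0 (negbTE (sigma_neq0 m)) orbF => /eqP.
  apply/eqP/rowP => i; rewrite mxE -coef_srow_comb -/Q.
  case: (srow_blk i) (srow_blk_le2 i) => [|[|[|]]] // _.
  - by rewrite (Q_eq0 _ Q0) coef0.
  - by rewrite (Q_eq0 _ Q1) coef0.
  - by rewrite (Q_eq0 _ Q2) coef0.
apply/rowP => l; rewrite mul_coef_row2_Mmat ?szQ // mxE.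
have /eqP := root_sigma l; case: (ups r0 r1 l) (ups_le2 r0 r1 l) => [|[|[|]]] // _ root_l.
- rewrite (_ : _ + _ = - (Q 0%N * sigma 0)); last first.
    by apply/eqP; rewrite -addr_eq0 addrC addrA relQ.
  by rewrite hornerN hornerM root_l mulr0 !oppr0.
- by rewrite hornerM root_l mulr0.
- by rewrite hornerM root_l mulr0.
Qed.

Definition moment (u : 'cV[Phi]_(2 * rho)) (m e : nat) : Phi :=
  \sum_(l : 'I_(2 * rho) | ups r0 r1 l == m) x l ^+ e * u l 0.

Lemma Mmat_mulmx_moment (u : 'cV[Phi]_(2 * rho)) (r : 'I_(2 * rho)) :
  (Mmat r0 r1 x *m u) r 0 =
  if (r < rho)%N then moment u 1 r - moment u 0 r
  else moment u 2 (r - rho) - moment u 0 (r - rho).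
Proof.
rewrite mxE (big_split3 _ (fun l : 'I_(2 * rho) => ups_le2 r0 r1 l)) /moment.
under eq_bigr => l /eqP ups_l do rewrite mxE ups_l /=.
under [X in _ + X + _]eq_bigr => l /eqP ups_l do rewrite mxE ups_l /=.
under [X in _ + X]eq_bigr => l /eqP ups_l do rewrite mxE ups_l /=.
have sum0E e :
    \sum_(l : 'I_(2 * rho) | ups r0 r1 l == 0%N) - x l ^+ e * u l 0 = - moment u 0 e.
  by rewrite -sumrN; apply: eq_bigr => l _; rewrite mulNr.
case: ifP => _; rewrite sum0E.
- by rewrite [X in _ + X]big1 ?addr0 ?(addrC (- _)) // => l _; rewrite mul0r.
- by rewrite [X in _ + X + _]big1 ?addr0 ?(addrC (- _)) // => l _; rewrite mul0r.
Qed.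

Lemma moment_eq (u : 'cV[Phi]_(2 * rho)) m e : Mmat r0 r1 x *m u = 0 ->
  (m <= 2)%N -> (e < rho)%N -> moment u m e = moment u 0 e.
Proof.
move=> /colP Mu0 m2 lt_e.
have lt_top : (e < 2 * rho)%N by lia.
have lt_bot : (rho + e < 2 * rho)%N by lia.
have := Mu0 (Ordinal lt_top); have := Mu0 (Ordinal lt_bot).
rewrite !Mmat_mulmx_moment !mxE /= lt_e ltnNge leq_addr addKn /=.
move=> /eqP + /eqP; rewrite !subr_eq0 => /eqP bot /eqP top.
by case: m m2 => [|[|[|]]].
Qed.

Lemma sum_horner_moment (u : 'cV[Phi]_(2 * rho)) m (p : {poly Phi}) :
  (size p <= rho)%N ->
  \sum_(l : 'I_(2 * rho) | ups r0 r1 l == m) p.[x l] * u l 0 =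
  \sum_(e < rho) p`_e * moment u m e.
Proof.
move=> szp; under eq_bigr => l _ do rewrite (horner_coef_wide _ szp) mulr_suml.
rewrite exchange_big; apply: eq_bigr => e _; rewrite mulr_sumr.
by apply: eq_bigr => l _; rewrite mulrA.
Qed.

Lemma Smat_mul_moment (u : 'cV[Phi]_(2 * rho)) : Mmat r0 r1 x *m u = 0 ->
  Smat r0 r1 r2 x *m \col_(c < rho) moment u 0 (rho - c.+1) = 0.
Proof.
move=> Mu0; apply/colP => i; rewrite !mxE.
have revK (e : 'I_rho) : (rho - (rho - e.+1).+1 = e)%N by have := ltn_ord e; lia.
under eq_bigr => c _ do rewrite Smat_coef mxE.
rewrite (reindex_inj rev_ord_inj) /=.
under eq_bigr => e _ do rewrite revK -(moment_eq Mu0 (srow_blk_le2 i) (ltn_ord e)).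
rewrite -sum_horner_moment ?size_srow_poly // big1 // => l /eqP ups_l.
by rewrite /srow_poly hornerM -ups_l (eqP (root_sigma l)) mulr0 mul0r.
Qed.

Lemma moment_eq0 (u : 'cV[Phi]_(2 * rho)) m e :
  Mmat r0 r1 x *m u = 0 -> \det (Smat r0 r1 r2 x) != 0 ->
  (m <= 2)%N -> (e < rho)%N -> moment u m e = 0.
Proof.
move=> Mu0 detS m2 lt_e; rewrite (moment_eq Mu0 m2 lt_e).
have S_unit : Smat r0 r1 r2 x \in unitmx by rewrite unitmxE unitfE.
have := mulKmx S_unit (\col_(c < rho) moment u 0 (rho - c.+1)).
rewrite Smat_mul_moment // mulmx0 => /colP/(_ (rev_ord (Ordinal lt_e))).
by rewrite !mxE /= (_ : rho - _.+1 = e)%N //; lia.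
Qed.

Lemma det_Mmat_neq0 :
  (forall l l' : 'I_(2 * rho), ups r0 r1 l = ups r0 r1 l' -> l != l' -> x l != x l') ->
  \det (Smat r0 r1 r2 x) != 0 -> \det (Mmat r0 r1 x) != 0.
Proof.
move=> x_inj detS; apply/negP; rewrite -det_tr => /det0P[v v_neq0 vM].
have Mu0 : Mmat r0 r1 x *m v^T = 0 by rewrite -[Mmat _ _ _]trmxK -trmx_mul vM trmx0.
apply: (negP v_neq0); apply/eqP/rowP => l0; rewrite !mxE.
set m := ups r0 r1 l0.
(* L vanishes on the block of l0 except at l0, where distinctness makes it nonzero. *)
pose L := \prod_(l : 'I_(2 * rho) | (ups r0 r1 l == m) && (l != l0)) ('X - (x l)%:P).
have sigmaE : sigma m = ('X - (x l0)%:P) * L by rewrite /sigma_poly (bigD1 l0).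
have szL : (size L <= rho)%N.
  have := size_sigma (ups_le2 r0 r1 l0).
  rewrite -/m sigmaE size_monicM ?monicXsubC //.
    by rewrite size_XsubC /= => -[]; rewrite add0n => ->; exact/ltnW/rhom_lt.
  by apply: monic_neq0; apply: monic_prod_XsubC.
have := sum_horner_moment v^T m szL.
rewrite [RHS]big1 => [|e _]; last by rewrite moment_eq0 ?mulr0 ?ups_le2.
rewrite (bigD1 l0) //= big1 ?addr0 => [|l /andP[ups_l l_neq]]; last first.
  by rewrite horner_prod (bigD1 l) ?ups_l ?l_neq //= !hornerE subrr !mul0r.
move/eqP; rewrite mxE mulf_eq0 => /orP[|/eqP //].
rewrite horner_prod => /prodf_eq0[l /andP[/eqP ups_l l_neq]].
by rewrite !hornerE subr_eq0 eq_sym (negbTE (x_inj _ _ ups_l l_neq)).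
Qed.

Lemma det_Mmat_neq0_block_inj : \det (Mmat r0 r1 x) != 0 ->
  forall l l' : 'I_(2 * rho), ups r0 r1 l = ups r0 r1 l' -> l != l' -> x l != x l'.
Proof.
move=> detM l l' ups_eq l_neq; apply: contraNneq detM => x_eq.
by rewrite -det_tr (determinant_alternate l_neq) // => r; rewrite !mxE ups_eq x_eq.
Qed.

End Sylvester.

Theorem mainTheorem18 (Phi : fieldType) (rho r0 r1 r2 : nat)
  (hrho : (3 <= rho)%N) (h0 : (2 <= r0)%N) (h01 : (r0 <= r1)%N)
  (h12 : (r1 <= r2)%N) (h2 : (r2 < rho)%N) (hsum : (r0 + r1 + r2 = 2 * rho)%N)
  (alpha : 'I_(2 * rho) -> Phi) :
  \det (Mmat r0 r1 alpha) != 0 <->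
  (\det (Smat r0 r1 r2 alpha) != 0 /\
   forall m : nat, (m <= 2)%N ->
     forall l l' : 'I_(2 * rho),
       ups r0 r1 l = m -> ups r0 r1 l' = m -> l != l' -> alpha l != alpha l').
Proof.
have r0_lt : (r0 < rho)%N by lia.
have r1_lt : (r1 < rho)%N by lia.
split=> [detM | [detS alpha_inj]].
  split; first by apply: contra detM; apply: (det_Mmat_eq0 hsum r0_lt r1_lt h2).
  move=> m _ l l' ups_l ups_l'; apply: (det_Mmat_neq0_block_inj detM).
  by rewrite ups_l ups_l'.
apply: (det_Mmat_neq0 hsum r0_lt r1_lt h2) detS => l l' ups_eq.
exact: alpha_inj (ups_le2 r0 r1 l) l l' erefl (esym ups_eq).
Qed.
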